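(* Let $\delta\in[\frac{\sqrt2}{2},1)$ and $p\in(0,1)$. If $\delta\le 1-(6-4\sqrt2)p$, then $$(1+\delta)2^{\frac p2-1}\Big(\frac{g(p)}{1-\delta}\Big)^{p/2}<1,$$ where $g(p)=\frac{p}{2}(1-\frac{p}{2})^{\frac{2}{p}-1}$. *)

From Stdlib Require Import Reals.
Open Scope R_scope.

(* g(p) = p/2 * (1 - p/2)^(2/p - 1), real exponent via Rpower (base > 0 for p in (0,1)). *)
Definition g (p : R) : R := (p / 2) * Rpower (1 - p / 2) (2 / p - 1).

(* With [t = p/2] and [eps = 1 - delta], the left-hand side equals
   [(2 - eps) 2^(t-1) (1-t)^(1-t) t^t eps^(-t)], which decreases in [eps]; the
   hypothesis says [eps >= c t] with [c = 12 - 8 sqrt 2].  At [eps = c t] its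
   logarithm is [h t] below, a strictly convex function of [t] vanishing at
   [t = 0] and, because [(2 - c/2)^2 = 4 c], at [t = 1/2]; so it is negative on
   [(0, 1/2)]. *)

From Stdlib Require Import Reals Lra.
From Coquelicot Require Import Coquelicot.
Open Scope R_scope.

Lemma neg_between_zeros_of_convex (f df : R -> R) (a b : R) :
  (forall x, a <= x <= b -> is_derive f x (df x)) ->
  (forall x y, a < x -> x < y -> y < b -> df x < df y) ->
  f a = 0 -> f b = 0 ->
  forall t, a < t < b -> f t < 0.
Proof.
  intros Hf Hdf Ha Hb t Ht.
  assert (Hf' : forall x, a <= x <= b -> derivable_pt_lim f x (df x)).
  { intros x Hx; apply is_derive_Reals, Hf; exact Hx. }
  apply Rnot_le_lt; intros Hft.
  destruct (MVT_cor2 f df a t ltac:(lra)) as [x [Ex Hx]].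
  { intros y Hy; apply Hf'; lra. }
  destruct (MVT_cor2 f df t b ltac:(lra)) as [y [Ey Hy]].
  { intros z Hz; apply Hf'; lra. }
  assert (Hdx : 0 <= df x) by nra.
  assert (Hdy : df y <= 0) by nra.
  pose proof (Hdf x y ltac:(lra) ltac:(lra) ltac:(lra)).
  lra.
Qed.

Lemma sqrt2_bounds : 1.41 < sqrt 2 < 1.42.
Proof.
  pose proof (sqrt_sqrt 2 ltac:(lra)). pose proof (sqrt_pos 2). split; nra.
Qed.

Definition c : R := 12 - 8 * sqrt 2.

Lemma c_bounds : 0.64 < c < 0.72.
Proof. pose proof sqrt2_bounds; unfold c; lra. Qed.

Lemma c_square_identity : (2 - c / 2) * (2 - c / 2) = 4 * c.
Proof.
  pose proof (sqrt_sqrt 2 ltac:(lra)). unfold c. nra.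
Qed.

Definition h (t : R) : R :=
  ln (2 - c * t) - t * ln c + (t - 1) * ln 2 + (1 - t) * ln (1 - t).

Definition h' (t : R) : R := - c / (2 - c * t) - ln c + ln 2 - ln (1 - t) - 1.

Definition h'' (t : R) : R := - (c * c) / ((2 - c * t) * (2 - c * t)) + / (1 - t).

Lemma is_derive_h t : 0 <= t <= 1/2 -> is_derive h t (h' t).
Proof.
  intros Ht. pose proof c_bounds. unfold h, h'.
  auto_derive.
  - repeat split; nra.
  - unfold Rminus, Rdiv. field. split; nra.
Qed.

Lemma is_derive_h' t : 0 <= t <= 1/2 -> is_derive h' t (h'' t).
Proof.
  intros Ht. pose proof c_bounds. unfold h', h''.
  auto_derive.
  - repeat split; nra.
  - field. split; nra.
Qed.

Lemma h''_pos t : 0 <= t <= 1/2 -> 0 < h'' t.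
Proof.
  intros Ht. pose proof c_bounds as Hc. unfold h''.
  assert (Hd : c < 2 - c * t) by nra.
  assert (Hcc : c * c / ((2 - c * t) * (2 - c * t)) < 1).
  { apply Rlt_div_l; nra. }
  assert (Hinv : 1 <= / (1 - t)).
  { rewrite <- Rinv_1. apply Rinv_le_contravar; lra. }
  lra.
Qed.

Lemma h_0 : h 0 = 0.
Proof.
  unfold h. rewrite Rminus_0_r, Rmult_0_r, Rminus_0_r, ln_1. ring.
Qed.

Lemma h_half : h (1/2) = 0.
Proof.
  pose proof c_bounds. unfold h.
  assert (Hln : ln ((2 - c * (1/2)) * (2 - c * (1/2))) = ln ((2 * 2) * c)).
  { f_equal. replace (c * (1/2)) with (c / 2) by field.
    rewrite c_square_identity. ring. }
  rewrite !ln_mult in Hln by nra.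
  replace (1 - 1/2) with (/2) by field. rewrite ln_Rinv; lra.
Qed.

Lemma h_neg t : 0 < t < 1/2 -> h t < 0.
Proof.
  apply (neg_between_zeros_of_convex h h' 0 (1/2)).
  - exact is_derive_h.
  - intros x y Hx Hxy Hy.
    apply (incr_function h' 0 (1/2) h''); simpl; try lra.
    + intros z Hz0 Hz1. apply is_derive_h'. lra.
    + intros z Hz0 Hz1. apply h''_pos. lra.
  - exact h_0.
  - exact h_half.
Qed.

Lemma ln_g p : 0 < p < 1 -> ln (g p) = ln (p / 2) + (2 / p - 1) * ln (1 - p / 2).
Proof.
  intros Hp. unfold g, Rpower.
  rewrite ln_mult, ln_exp; [reflexivity | lra | apply exp_pos].
Qed.

Lemma log_lhs_le_h (t eps : R) : 0 < t < 1/2 -> c * t <= eps < 1 ->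
  ln (2 - eps) + (t - 1) * ln 2
    + t * (ln t + (1 / t - 1) * ln (1 - t) - ln eps) <= h t.
Proof.
  intros Ht Heps. pose proof c_bounds. unfold h.
  assert (Hct : 0 < c * t) by nra.
  assert (L1 : ln (2 - eps) <= ln (2 - c * t)) by (apply ln_le; lra).
  assert (L2 : ln c + ln t <= ln eps) by (rewrite <- ln_mult by lra; apply ln_le; lra).
  assert (L3 : t * (ln c + ln t) <= t * ln eps) by (apply Rmult_le_compat_l; lra).
  replace (t * (ln t + (1 / t - 1) * ln (1 - t) - ln eps))
    with (t * ln t + (1 - t) * ln (1 - t) - t * ln eps) by (field; lra).
  lra.
Qed.

Theorem lemma2 (delta p : R) :
  sqrt 2 / 2 <= delta -> delta < 1 ->
  0 < p -> p < 1 ->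
  delta <= 1 - (6 - 4 * sqrt 2) * p ->
  (1 + delta) * Rpower 2 (p / 2 - 1) * Rpower (g p / (1 - delta)) (p / 2) < 1.
Proof.
  intros Hdelta1 Hdelta2 Hp1 Hp2 Hdelta.
  pose proof sqrt2_bounds.
  set (t := p / 2). set (eps := 1 - delta).
  assert (Ht : 0 < t < 1/2) by (unfold t; lra).
  assert (Heps : c * t <= eps < 1).
  { replace (c * t) with ((6 - 4 * sqrt 2) * p) by (unfold c, t; field).
    unfold eps; lra. }
  assert (Hg : 0 < g p) by (unfold g, Rpower; apply Rmult_lt_0_compat; [lra | apply exp_pos]).
  assert (Hexp : (1 + delta) * Rpower 2 (t - 1) * Rpower (g p / eps) t
    = exp (ln (2 - eps) + (t - 1) * ln 2
           + t * (ln t + (1 / t - 1) * ln (1 - t) - ln eps))).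
  { unfold Rpower. rewrite !exp_plus, exp_ln by (unfold eps; lra).
    rewrite ln_div, ln_g by (unfold eps, t in *; lra).
    replace (2 / p - 1) with (1 / t - 1) by (unfold t; field; lra).
    unfold eps, t. replace (2 - (1 - delta)) with (1 + delta) by ring. ring. }
  rewrite Hexp. apply Rlt_le_trans with (exp 0); [apply exp_increasing | rewrite exp_0; lra].
  pose proof (log_lhs_le_h t eps Ht Heps). pose proof (h_neg t Ht). lra.
Qed.
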